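(* Let $X$ and $Y$ be metric spaces and let $A(X)\subseteq C(X)$ and $A(Y)\subseteq C(Y)$ be adequate subspaces. Assume that either (a) $A(Y)=A^{\mathrm{loc}}(Y)$ or $A(Y)=A^{\mathrm{loc}}_b(Y)$, or (b) $Y$ is complete and for every separated sequence $(y_n)$ in $Y$ there exists $g\in A(Y)$ with $g(y_{2n})=1$ and $g(y_{2n-1})=0$ for all $n$. If $h:\mathcal{A}X\to\mathcal{A}Y$ is a homeomorphism and $x_0\in X$, then $h(x_0)\in Y$.
   Context: All functions are real-valued. $A(X)\subseteq C(X)$ separates points from closed sets if for every $x\in X$ and closed $F\not\ni x$ there is $f\in A(X)$ with $f(x)=1$, $f=0$ on $F$. $A(X)$ is adequate if (a) it separates points from closed sets and contains the constants; (b) there is a continuous nondecreasing $g:\mathbb{R}\to\mathbb{R}$ with $g(t)=0$ for $t\le0$, $g(t)=1$ for $t\ge1$, and $g\circ f\in A(X)$ for all $f\in A(X)$; (c) every $f\in A(X)$ is a difference of two nonnegative elements of $A(X)$. $A^{\mathrm{loc}}(Y)$ is the space of real functions $f$ on $Y$ such that every $y_0\in Y$ has a neighborhood $U$ and some $g\in A(Y)$ with $f=g$ on $U$; $A^{\mathrm{loc}}_b(Y)$ is its subspace of bounded functions. A sequence (set of points) in a metric space is separated if there is $\varepsilon>0$ with $d(y,y')\ge\varepsilon$ for any two distinct points $y,y'$ of it. The $A(X)$-compactification $\mathcal{A}X$ is the closure of $i(X)$ in $[-\infty,\infty]^{A(X)}$ (product of order topologies), $i(x)(\varphi)=\varphi(x)$,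 with $X$ identified with $i(X)$; $\mathcal{A}Y$ is defined analogously. *)

From HB Require Import structures.
From mathcomp Require Import all_boot all_order all_algebra.
From mathcomp Require Import all_classical all_reals all_analysis.
Set Implicit Arguments. Unset Strict Implicit. Unset Printing Implicit Defensive.
Import Order.TTheory GRing.Theory Num.Theory numFieldTopology.Exports numFieldNormedType.Exports.
Local Open Scope classical_set_scope.
Local Open Scope ring_scope.

Section Adequate.
Context {R : realType} {X : topologicalType}.

Definition subspace_of_C (A : set (X -> R)) : Prop :=
  (forall f, A f -> continuous f) /\
  A (fun _ => 0) /\
  (forall f g, A f -> A g -> A (f \+ g)) /\
  (forall (c : R) f, A f -> A (fun x => c * f x)).

Definition separates_points_from_closed_sets (A : set (X -> R)) : Prop :=
  forall (x : X) (F : set X), closed F -> ~ F x ->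
    exists f, A f /\ f x = 1 /\ (forall z, F z -> f z = 0).

Definition adequate (A : set (X -> R)) : Prop :=
  (separates_points_from_closed_sets A /\ (forall c : R, A (fun _ => c))) /\
  (exists g : R -> R, continuous g /\ {homo g : s t / s <= t} /\
     (forall t, t <= 0 -> g t = 0) /\ (forall t, 1 <= t -> g t = 1) /\
     (forall f, A f -> A (g \o f))) /\
  (forall f, A f -> exists f1 f2, A f1 /\ A f2 /\
     (forall x, 0 <= f1 x) /\ (forall x, 0 <= f2 x) /\ f = f1 \- f2).

Definition Aloc (A : set (X -> R)) : set (X -> R) :=
  [set f | forall y0 : X, exists U, nbhs y0 U /\
     exists g, A g /\ (forall y, U y -> f y = g y)].

Definition Aloc_b (A : set (X -> R)) : set (X -> R) :=
  [set f | Aloc A f /\ exists M : R, forall y, `|f y| <= M].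

End Adequate.

(* The A(X)-compactification: closure of i(X) in [-oo,+oo]^{A(X)}
   (product of order topologies on \bar R). *)
Definition idx {R : realType} {X : Type} (A : set (X -> R)) := {f : X -> R | A f}.

Definition cembed {R : realType} {X : Type} (A : set (X -> R)) (x : X)
  : {ptws idx A -> \bar R} := fun f => ((proj1_sig f) x)%:E.

Arguments cembed {R X} A x.

Definition compactif {R : realType} {X : Type} (A : set (X -> R))
  : set {ptws idx A -> \bar R} := @closure {ptws idx A -> \bar R} (range (cembed A)).

Definition homeomorphism_on {T U : topologicalType} (S : set T) (S' : set U)
  (h : T -> U) : Prop :=
  set_fun S S' h /\
  exists k : U -> T, set_fun S' S k /\
    (forall t, S t -> k (h t) = t) /\ (forall u, S' u -> h (k u) = u) /\
    {within S, continuous h} /\ {within S', continuous k}.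

Definition separated_seq {R : realType} {Y : metricType R} (y : nat -> Y) : Prop :=
  exists2 e : R, 0 < e & forall n m, n <> m -> e <= mdist (y n) (y m).

Definition complete_metric {R : realType} (Y : metricType R) : Prop :=
  forall u : nat -> Y, cauchy_ball (u @ \oo) -> exists l : Y, u @ \oo --> l.

Arguments compactif {R X} A.
Arguments homeomorphism_on {T U} S S' h.

From HB Require Import structures.
From mathcomp Require Import all_boot all_order all_algebra.
From mathcomp Require Import all_classical all_reals all_analysis.
From mathcomp Require Import lra.
Set Implicit Arguments. Unset Strict Implicit. Unset Printing Implicit Defensive.
Import Order.TTheory GRing.Theory Num.Theory numFieldTopology.Exports numFieldNormedType.Exports.
Local Open Scope classical_set_scope.
Local Open Scope ring_scope.

(* Points of X have a countable neighbourhood base in the compactification,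
   made of the sets [1/2 < p phi_n] where phi_n in A(X) is 1 at x0 and vanishes
   off the ball of radius 1/(n+1); h transports it, so h(x0) is the limit of
   embedded points y_n of Y.  If h(x0) were not in Y, the y_n would eventually
   stay away from every point of Y.  Under (a), bump functions of A(Y) on
   disjoint balls around a subsequence glue into a locally finite sum g that is
   1 at odd and 0 at even indices; under (b), completeness rules out a Cauchy
   subsequence, so some subsequence is separated and the hypothesis provides
   such a g.  Either way g(y_n) converges to h(x0)(g), which cannot be both 0
   and 1. *)

Lemma ptws_cvgP (I : Type) (T : topologicalType) (F : set_system {ptws I -> T})
  {FF : Filter F} (f : {ptws I -> T}) :
  F --> f <-> forall i, (fun g : {ptws I -> T} => g i) @ F --> f i.
Proof.
have surj i : [set (g : {ptws I -> T}) i | g in [set: {ptws I -> T}]] = [set: T].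
  by rewrite eqEsubset; split=> v // _; exists (fun _ => v).
split.
- move=> /cvg_sup fF i; have /cvg_image := fF i.
  move=> /(_ (surj i)) fFi W /fFi [A FA AW]; rewrite nbhs_simpl /=.
  by apply: filterS FA => g Ag; rewrite -AW; exists g.
- move=> fF; apply/cvg_sup => i; apply/cvg_image; first exact: surj.
  move=> W /fF; rewrite nbhs_simpl => FW.
  by exists ((fun g : {ptws I -> T} => g i) @^-1` W); rewrite ?image_preimage ?surj.
Qed.

Lemma ptws_proj_continuous (I : Type) (T : topologicalType) (i : I) :
  continuous (fun p : {ptws I -> T} => p i).
Proof. by move=> p; have [+ _] := ptws_cvgP (F := nbhs p) p; apply. Qed.

Definition countable_nbhs_base_within {T : topologicalType} (S : set T) (p : T) :=
  exists V : nat -> set T, (forall n, nbhs p (V n)) /\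
    forall U, nbhs p U -> exists n, S `&` V n `<=` U.

Lemma homeomorphism_countable_nbhs_base {T U : topologicalType} (S : set T) (S' : set U)
    (h : T -> U) (p : T) :
  homeomorphism_on S S' h -> S p ->
  countable_nbhs_base_within S p -> countable_nbhs_base_within S' (h p).
Proof.
move=> [hS [k [kS [kh [hk [hc kc]]]]]] Sp [V [Vp VU]].
have /subspace_continuousP hc' := hc; have /subspace_continuousP kc' := kc.
exists (fun n z => S' z -> V n (k z)); split.
  by move=> n; have := kc' _ (hS _ Sp) (V n); rewrite /from_subspace kh //; apply.
move=> W /(hc' _ Sp) /VU [n Vn]; exists n => z [S'z Vz].
have := Vn _ (conj (kS _ S'z) (Vz S'z)) (kS _ S'z).
by rewrite /preimage /from_subspace /= hk.
Qed.

Lemma closure_range_cvg_seq (T : topologicalType) (I : Type) (e : I -> T) (p : T) :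
  closure (range e) p -> countable_nbhs_base_within (closure (range e)) p ->
  exists u : nat -> I, e \o u @ \oo --> p.
Proof.
move=> clp [V [Vp VU]].
pose W n z := forall j, (j <= n)%N -> V j z.
have Wp n : nbhs p (W n).
  elim: n => [|n Wn]; first by apply: filterS (Vp 0%N) => z Vz [].
  apply: filterS (filterI Wn (Vp n.+1)) => z [Wz Vz] j.
  by rewrite leq_eqVlt => /orP[/eqP->|] //; exact: Wz.
have [u eu] : {u : nat -> I & forall n, W n (e (u n))}.
  apply: (@choice _ _ (fun n i => W n (e i))) => n.
  by have [_ [[i _ <-] Wi]] := clp _ (Wp n); exists i.
exists u => U /VU [m Vm]; exists m => // n /= mn; apply: Vm; split.
  by apply: subset_closure; exists (u n).
exact: eu.
Qed.

Lemma metric_ball_open (R : realType) (Y : metricType R) (x : Y) (r : R) :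
  open (ball x r).
Proof.
rewrite openE => y; rewrite ballEmdist /= => xy.
apply/nbhs_ballP; exists (r - mdist x y); first by rewrite /=; lra.
by move=> z; rewrite /= !ballEmdist /= => yz; have := metric_triangle x y z; lra.
Qed.

Lemma compactif_closed_value (R : realType) (X : Type) (A : set (X -> R))
    (p : {ptws idx A -> \bar R}) (W : set {ptws idx A -> \bar R}) (psi : idx A)
    (C : set (\bar R)) :
  compactif A p -> open W -> W p -> closed C ->
  (forall x, W (cembed A x) -> C (sval psi x)%:E) -> C (p psi).
Proof.
move=> Ap oW Wp cC WC; apply: contrapT => nCp.
have oWC : open (W `&` [set p' : {ptws idx A -> \bar R} | ~ C (p' psi)]).
  apply: openI => //.
  by apply: (proj1 (continuousP _) (@ptws_proj_continuous _ (\bar R) psi) (~` C)); rewrite openC.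
have [_ [[x _ <-] [Wx nCx]]] := Ap _ (open_nbhs_nbhs (conj oWC (conj Wp nCp))).
exact: nCx (WC x Wx).
Qed.

Section compactif_nbhs_base.
Variables (R : realType) (X : metricType R) (A : set (X -> R)).
Hypothesis Acont : forall f, A f -> continuous f.
Variables (x0 : X) (phi : nat -> idx A).
Hypothesis phi_x0 : forall n, sval (phi n) x0 = 1.
Hypothesis phi_out : forall n x, ~ ball x0 n.+1%:R^-1 x -> sval (phi n) x = 0.

Let V n := [set p : {ptws idx A -> \bar R} | (2^-1)%:E < p (phi n)]%E.

Let V_open n : open (V n).
Proof.
exact: (proj1 (continuousP _) (@ptws_proj_continuous _ (\bar R) (phi n)) _
  (@open_ereal_gt_ereal _ (2^-1)%:E)).
Qed.

Let V_cembed n x : V n (cembed A x) -> ball x0 n.+1%:R^-1 x.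
Proof.
move=> Vx; apply: contrapT => /phi_out phix.
by move: Vx; rewrite /V /= /cembed phix lte_fin; lra.
Qed.

Lemma cvg_cembed_of_bumps (p : nat -> {ptws idx A -> \bar R}) :
  (forall n, compactif A (p n)) -> (forall n, V n (p n)) -> p @ \oo --> cembed A x0.
Proof.
move=> Ap Vp; apply/ptws_cvgP => psi; set a := sval psi x0.
move=> W; rewrite nbhs_simpl /= => /nbhs_EFin /nbhs_ballP [eps eps0 epsW].
have /nbhs_ballP [del del0 delpsi] : nbhs x0 (sval psi @^-1` ball a (eps / 2)).
  by apply: (Acont (proj2_sig psi)); apply: nbhsx_ballx; rewrite divr_gt0.
have [N _ Ndel] := near_infty_natSinv_lt (PosNum del0).
exists N => // n /= Nn.
pose C := [set e : \bar R | ((a - eps / 2)%:E <= e)%E] `&`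
          [set e | (e <= (a + eps / 2)%:E)%E].
have : C (p n psi).
  apply: (@compactif_closed_value R X A (p n) (V n) psi C (Ap n) (V_open n) (Vp n)).
    by apply: closedI; [exact: closed_ereal_le_ereal | exact: closed_ereal_ge_ereal].
  move=> x /V_cembed x0x.
  have /delpsi : ball x0 del x by apply: le_ball x0x; exact/ltW/Ndel.
  rewrite /= -ball_normE /= /C /= !lee_fin => /ltW.
  by rewrite ler_distlC => /andP[].
case: (p n psi) => [r [ar ra]|[_]|[]]; rewrite ?leye_eq ?leeNy_eq //.
apply: epsW; rewrite -ball_normE /=.
have : `|a - r| <= eps / 2 by rewrite ler_distlC -!lee_fin ar ra.
by move: eps0 => /= ? ?; lra.
Qed.

Lemma countable_nbhs_base_cembed_of_bumps :
  countable_nbhs_base_within (compactif A) (cembed A x0).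
Proof.
exists V; split.
  move=> n; apply: open_nbhs_nbhs; split => //.
  by rewrite /V /= /cembed phi_x0 lte_fin; lra.
move=> U Ux0; apply: contrapT => noV.
have [p pV] : {p : nat -> {ptws idx A -> \bar R} &
    forall n, (compactif A `&` V n) (p n) /\ ~ U (p n)}.
  apply: (@choice _ _ (fun n p => (compactif A `&` V n) p /\ ~ U p)) => n.
  apply: contrapT => allU; apply: noV; exists n => z Vz.
  by apply: contrapT => nUz; apply: allU; exists z.
have [N _ NU] := @cvg_cembed_of_bumps p (fun n => (pV n).1.1) (fun n => (pV n).1.2) _ Ux0.
exact: (pV N).2 (NU N (leqnn N)).
Qed.

End compactif_nbhs_base.

Lemma countable_nbhs_base_cembed (R : realType) (X : metricType R) (A : set (X -> R)) :
  (forall f, A f -> continuous f) -> separates_points_from_closed_sets A ->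
  forall x0, countable_nbhs_base_within (compactif A) (cembed A x0).
Proof.
move=> Acont sepA x0.
have [phi phiP] : {phi : nat -> idx A & forall n, sval (phi n) x0 = 1 /\
    forall x, ~ ball x0 n.+1%:R^-1 x -> sval (phi n) x = 0}.
  apply: (@choice _ _ (fun n (f : idx A) => sval f x0 = 1 /\
    forall x, ~ ball x0 n.+1%:R^-1 x -> sval f x = 0)) => n.
  have clF : closed (~` ball x0 n.+1%:R^-1) by rewrite closedC; exact: metric_ball_open.
  have x0F : ~ (~` ball x0 n.+1%:R^-1) x0.
    by apply; apply: ballxx; rewrite invr_gt0 ltr0n.
  have [f [Af [fx0 fF]]] := sepA x0 _ clF x0F.
  by exists (exist _ f Af).
exact: (@countable_nbhs_base_cembed_of_bumps R X A Acont x0 phi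
  (fun n => (phiP n).1) (fun n => (phiP n).2)).
Qed.

Definition escaping {R : realType} {Y : metricType R} (y : nat -> Y) :=
  forall c : Y, exists2 r : R, 0 < r & \forall n \near \oo, r <= mdist c (y n).

Definition alternating {T : Type} {R : realType} (g : T -> R) (y : nat -> T) :=
  forall n, g (y n.*2.+1) = 1 /\ g (y n.*2) = 0.

Lemma increasing_cvg_infty (s : nat -> nat) :
  {homo s : m n / (m < n)%N} -> s @ \oo --> \oo.
Proof.
move=> sinc; have le_s n : (n <= s n)%N.
  by elim: n => // n IH; exact: leq_ltn_trans IH (sinc _ _ (ltnSn n)).
by move=> P [N _ NP]; exists N => // n Nn; apply: NP; exact: leq_trans Nn (le_s n).
Qed.

Lemma escaping_comp (R : realType) (Y : metricType R) (y : nat -> Y) (s : nat -> nat) :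
  escaping y -> s @ \oo --> \oo -> escaping (y \o s).
Proof. by move=> esc soo c; have [r r0 ry] := esc c; exists r => //; exact: (soo _ ry). Qed.

Lemma escaping_of_cvg_cembed (R : realType) (Y : metricType R) (A : set (Y -> R))
    (y : nat -> Y) (q : {ptws idx A -> \bar R}) :
  (forall f, A f -> continuous f) -> cembed A \o y @ \oo --> q ->
  ~ range (cembed A) q -> escaping y.
Proof.
move=> Acont yq nq c.
have [psi qpsi] : exists psi, q psi <> (sval psi c)%:E.
  apply: contrapT => qc; apply: nq; exists c => //.
  apply: functional_extensionality_dep => psi.
  by apply: contrapT => qcpsi; apply: qc; exists psi => /esym.
have := @ereal_hausdorff R; rewrite open_hausdorff => /(_ _ _ (introN eqP qpsi)).
move=> [[U V] /= [/set_mem Uq /set_mem Vc] [oU oV /eqP UV0]].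
have /nbhs_ballP [r r0 rV] : nbhs c (sval psi @^-1` (fun t => V t%:E)).
  apply: (Acont _ (proj2_sig psi)).
  exact: (proj1 (nbhs_EFin V _) (open_nbhs_nbhs (conj oV Vc))).
exists r => //.
have := proj1 (ptws_cvgP q) yq psi U (open_nbhs_nbhs (conj oU Uq)).
move=> [N _ NU]; exists N => // n /NU Un; rewrite leNgt; apply/negP => cyr.
suff : (U `&` V) (sval psi (y n))%:E by rewrite UV0.
by split => //; apply: rV; rewrite ballEmdist.
Qed.

Lemma not_alternating_of_cvg_cembed (R : realType) (Y : Type) (A : set (Y -> R))
    (y : nat -> Y) (q : {ptws idx A -> \bar R}) (g : Y -> R) :
  cembed A \o y @ \oo --> q -> A g -> ~ alternating g y.
Proof.
move=> yq Ag alt; pose psi : idx A := exist _ g Ag.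
have gyq : (fun n => (g (y n))%:E) @ \oo --> q psi.
  exact: (proj1 (ptws_cvgP q) yq psi).
have lim_sub (s : nat -> nat) (c : R) : {homo s : m n / (m < n)%N} ->
    (forall n, g (y (s n)) = c) -> q psi = c%:E.
  move=> sinc gc; have := cvg_comp _ _ (increasing_cvg_infty sinc) gyq.
  have -> : (fun n => (g (y n))%:E) \o s = cst c%:E by apply: funext => n /=; rewrite gc.
  by move=> /(cvg_unique (@ereal_hausdorff R)); apply; exact: cvg_cst.
have odd_inc : {homo (fun n => n.*2.+1) : m n / (m < n)%N} by move=> m n; rewrite ltnS ltn_double.
have even_inc : {homo double : m n / (m < n)%N} by move=> m n; rewrite ltn_double.
have := lim_sub _ 1 odd_inc (fun n => (alt n).1).
have := lim_sub _ 0 even_inc (fun n => (alt n).2).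
by move=> -> [] /eqP; rewrite eq_sym oner_eq0.
Qed.

Definition infinitely_often (P : set nat) := forall N, exists2 n, (N <= n)%N & P n.

Lemma infinitely_often_subseq (P : set nat) (B : nat -> nat) : infinitely_often P ->
  exists s : nat -> nat, [/\ {homo s : m n / (m < n)%N}, forall k, P (s k) &
    forall j k, (j < k)%N -> (B (s j) <= s k)%N].
Proof.
move=> Pinf.
have step (a : nat) : {b | [/\ P b, (a < b)%N & forall i, (i <= a)%N -> (B i <= b)%N]}.
  apply: cid; have [b Nb Pb] := Pinf (a.+1 + \max_(i < a.+1) B i).
  exists b; split => //; first exact: leq_trans (leq_addr _ _) Nb.
  move=> i ia; apply: leq_trans Nb; apply: leq_trans (leq_addl _ _).
  exact: (@leq_bigmax _ (fun i : 'I_a.+1 => B i) (Ordinal (ia : (i < a.+1)%N))).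
have [f [_ fstep]] := dependent_choice step 0%N.
have finc : {homo f : m n / (m < n)%N}.
  by apply: homo_ltn; [exact: ltn_trans | by move=> n; case: (fstep n)].
exists (f \o S); split => //=.
- by move=> m n mn; apply: finc.
- by move=> k; case: (fstep k).
- move=> j k jk; have [_ _ fB] := fstep k; apply: fB.
  by move: jk; rewrite leq_eqVlt => /orP[/eqP -> //|/finc /ltnW].
Qed.

Section subsequences.
Variables (R : realType) (Y : metricType R).

Lemma separated_subseq_of_far (y : nat -> Y) (P : set nat) (eps : R) :
  0 < eps -> infinitely_often P ->
  (forall c, \forall n \near \oo, P n -> eps <= mdist c (y n)) ->
  exists s, {homo s : m n / (m < n)%N} /\ separated_seq (y \o s).
Proof.
move=> eps0 Pinf far.
have [N farN] : {N : Y -> nat & forall c n, (N c <= n)%N -> P n -> eps <= mdist c (y n)}.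
  apply: (@choice _ _ (fun c N => forall n, (N <= n)%N -> P n -> eps <= mdist c (y n))).
  by move=> c; have [N _ NP] := far c; exists N => n /NP.
have [s [sinc sP sN]] := infinitely_often_subseq (fun n => N (y n)) Pinf.
exists s; split => //; exists eps => // m n.
wlog mn : m n / (m < n)%N => [wlog_mn nm|_].
  case: (ltngtP m n) => [/wlog_mn|/wlog_mn nm_d|//]; first exact.
  by rewrite metric_sym; apply: nm_d => /esym.
by apply: farN; [exact: sN | exact: sP].
Qed.

Fixpoint shrinking_sets (y : nat -> Y) (C : set nat -> nat -> Y) (k : nat) : set nat :=
  if k is k'.+1 then
    shrinking_sets y C k' `&`
      [set n | mdist (C (shrinking_sets y C k') k') (y n) < k'.+1%:R^-1]
  else setT.

Lemma cauchy_subseq_of_clustering (y : nat -> Y) :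
  (forall eps : R, 0 < eps -> forall P, infinitely_often P ->
     exists c, infinitely_often (P `&` [set n | mdist c (y n) < eps])) ->
  exists s, {homo s : m n / (m < n)%N} /\ cauchy_ex ((y \o s) @ \oo).
Proof.
move=> clust.
have [C CP] : {C : set nat * nat -> Y & forall Pk, infinitely_often Pk.1 ->
    infinitely_often (Pk.1 `&` [set n | mdist (C Pk) (y n) < Pk.2.+1%:R^-1])}.
  apply: (@choice _ _ (fun Pk c => infinitely_often Pk.1 ->
    infinitely_often (Pk.1 `&` [set n | mdist c (y n) < Pk.2.+1%:R^-1]))).
  move=> [P k]; have [Pinf|nP] := pselect (infinitely_often P); last by exists (y 0%N).
  have [|c cP] := clust k.+1%:R^-1 _ P Pinf; first by rewrite invr_gt0 ltr0n.
  by exists c.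
pose I := shrinking_sets y (fun P k => C (P, k)).
have Iinf k : infinitely_often (I k).
  by elim: k => [N|k IH]; [exists N | exact: (CP (I k, k))].
have Idec j k : (j <= k)%N -> I k `<=` I j.
  elim: k => [|k IH]; first by rewrite leqn0 => /eqP ->.
  by rewrite leq_eqVlt => /orP[/eqP -> //|/IH + n [Ikn _]]; apply.
have [pk pkP] : {pk : nat * nat -> nat & forall kN, (kN.2 <= pk kN)%N /\ I kN.1 (pk kN)}.
  by apply: (@choice _ _ (fun kN n => (kN.2 <= n)%N /\ I kN.1 n)) => -[k N] /=;
     have [n] := Iinf k N; exists n.
(* Diagonal choice: for j > k, y (s j) lies within 1/(k+1) of the k-th centre. *)
pose s := fix s k := if k is k'.+1 then pk (k, (s k').+1) else pk (0, 0)%N.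
have sI k : I k (s k) by case: k => [|k]; [exact: (pkP (0, 0)%N).2 | exact: (pkP (k.+1, _)).2].
exists s; split.
  by apply: homo_ltn; [exact: ltn_trans | move=> k; exact: (pkP (k.+1, _)).1].
move=> eps eps0; have [k _ keps] := near_infty_natSinv_lt (PosNum eps0).
exists (C (I k, k)); exists k.+1 => // j /= kj.
have [_ /= ck] := Idec _ _ kj _ (sI j).
by rewrite ballEmdist /=; exact: lt_trans ck (keps k (leqnn k)).
Qed.

Lemma cauchy_or_separated_subseq (y : nat -> Y) :
  exists s, {homo s : m n / (m < n)%N} /\
    (cauchy_ex ((y \o s) @ \oo) \/ separated_seq (y \o s)).
Proof.
have [[eps [eps0 [P [Pinf far]]]]|nofar] := pselect (exists eps : R, 0 < eps /\
    exists P, infinitely_often P /\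
      forall c, \forall n \near \oo, P n -> eps <= mdist c (y n)).
  by have [s [sinc sep]] := separated_subseq_of_far eps0 Pinf far; exists s; split; [|right].
suff [s [sinc cs]] : exists s, {homo s : m n / (m < n)%N} /\ cauchy_ex ((y \o s) @ \oo).
  by exists s; split; [|left].
apply: cauchy_subseq_of_clustering => eps eps0 P Pinf.
apply: contrapT => noc; apply: nofar; exists eps; split => //; exists P; split => // c.
apply: contrapT => notev; apply: noc; exists c => N.
apply: contrapT => noN; apply: notev; exists N => // n /= Nn Pn.
by rewrite leNgt; apply/negP => cn; apply: noN; exists n.
Qed.

Lemma escaping_separated_subseq (y : nat -> Y) : complete_metric Y -> escaping y ->
  exists s, {homo s : m n / (m < n)%N} /\ separated_seq (y \o s).
Proof.
move=> Ycomp esc; have [s [sinc [cs|sep]]] := cauchy_or_separated_subseq y; last by exists s.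
have [l yl] := Ycomp (y \o s) (proj2 (cauchy_ballP _) (cauchy_exP _ cs)).
have [r r0 far] := escaping_comp esc (increasing_cvg_infty sinc) l.
have [n [rn]] := filter_ex (filterI far (yl _ (nbhsx_ballx l r r0))).
by rewrite /= ballEmdist /=; lra.
Qed.

End subsequences.

(* Outside every B k the value is [f 0 w], which is 0 as soon as f 0 vanishes
   off B 0. *)
Definition glue {T R : Type} (f : nat -> T -> R) (B : nat -> set T) (w : T) : R :=
  f (xget 0%N [set k | B k w]) w.

Section glue.
Variables (R : realType) (T : topologicalType) (A : set (T -> R)).
Hypothesis A0 : A (fun _ => 0).
Hypothesis AD : forall f g, A f -> A g -> A (f \+ g).
Variables (f : nat -> T -> R) (B : nat -> set T).
Hypothesis Af : forall k, A (f k).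
Hypothesis f_out : forall k w, ~ B k w -> f k w = 0.
Hypothesis B_disj : forall j k w, B j w -> B k w -> j = k.
Hypothesis B_locfin : forall w : T, exists2 U : set T, nbhs w U &
  exists K, forall k u, (K <= k)%N -> U u -> ~ B k u.

Lemma glueE k w : B k w -> glue f B w = f k w.
Proof.
by move=> Bkw; rewrite /glue (@xget_unique _ 0%N [set j | B j w] k Bkw) // => j /B_disj; apply.
Qed.

Lemma glue_out w : (forall k, ~ B k w) -> glue f B w = 0.
Proof. by move=> nB; rewrite /glue f_out. Qed.

Lemma sum_in_subspace K : A (fun w => \sum_(k < K) f k w).
Proof.
elim: K => [|K IH].
  by rewrite (_ : (fun w => _) = fun _ => 0) //; apply: funext => w; rewrite big_ord0.
rewrite (_ : (fun w => _) = (fun w => \sum_(k < K) f k w) \+ f K); first exact: AD.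
by apply: funext => w; rewrite big_ord_recr.
Qed.

Lemma Aloc_glue : Aloc A (glue f B).
Proof.
move=> w; have [U Uw [K far]] := B_locfin w.
exists U; split => //; exists (fun u => \sum_(k < K) f k u); split; first exact: sum_in_subspace.
move=> u Uu; have [[k Bku]|nB] := pselect (exists k, B k u).
  have kK : (k < K)%N by rewrite ltnNge; apply/negP => Kk; exact: far Kk Uu Bku.
  rewrite (glueE Bku) (bigD1 (Ordinal kK)) //= big1 ?addr0 // => j /eqP jk.
  by apply: f_out => Bju; apply: jk; apply: val_inj; exact: B_disj Bju Bku.
rewrite glue_out; last by move=> k Bku; apply: nB; exists k.
by rewrite big1 // => j _; apply: f_out => Bju; apply: nB; exists j.
Qed.

End glue.

Lemma adequate_bump (R : realType) (T : topologicalType) (A : set (T -> R))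
    (x : T) (F : set T) :
  adequate A -> closed F -> ~ F x ->
  exists f, [/\ A f, f x = 1, forall z, F z -> f z = 0 & forall z, 0 <= f z <= 1].
Proof.
move=> [[sepA _] [[G [_ [Gmono [G0 [G1 AG]]]]] _]] cF Fx.
have [f [Af [fx fF]]] := sepA x F cF Fx.
have G01 t : 0 <= G t <= 1.
  apply/andP; split.
    by have [/G0 ->|t0] := leP t 0; [exact: lexx | rewrite -(G0 0) // Gmono // ltW].
  by have [/G1 ->|t1] := leP 1 t; [exact: lexx | rewrite -(G1 1) // Gmono // ltW].
exists (G \o f); split => //=; first exact: AG.
- by rewrite fx G1.
- by move=> z /fF ->; rewrite G0.
Qed.

Lemma escaping_disjoint_balls (R : realType) (Y : metricType R) (z : nat -> Y) :
  escaping z -> exists (s : nat -> nat) (rho : nat -> R),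
    [/\ {homo s : m n / (m < n)%N}, forall k, 0 < rho k, forall k, rho k <= k.+1%:R^-1 &
     forall j k w, ball (z (s j)) (rho j) w -> ball (z (s k)) (rho k) w -> j = k].
Proof.
move=> esc.
have [rN rNP] : {rN : Y -> R * nat & forall c, 0 < (rN c).1 /\
    forall n, ((rN c).2 <= n)%N -> (rN c).1 <= mdist c (z n)}.
  apply: (@choice _ _ (fun c rN => 0 < rN.1 /\
    forall n, (rN.2 <= n)%N -> rN.1 <= mdist c (z n))) => c.
  by have [r r0 [N _ Nr]] := esc c; exists (r, N).
pose r c := (rN c).1.
have [s [sinc _ sN]] := infinitely_often_subseq (fun n => (rN (z n)).2)
  (fun N => ex_intro2 _ setT N (leqnn N) I).
have far j k : (j < k)%N -> r (z (s j)) <= mdist (z (s j)) (z (s k)).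
  by move=> jk; apply: (rNP _).2; exact: sN.
pose m j := Num.min (r (z (s j)) / 2) j.+1%:R^-1.
(* A running minimum, so that rho j + rho k <= r (z (s j)) for j < k. *)
pose rho k := \big[Num.min/1]_(j < k.+1) m j.
have rho_m j k : (j <= k)%N -> rho k <= m j.
  by move=> jk; exact: (bigmin_le 1 (Ordinal (jk : (j < k.+1)%N)) (fun i : 'I_k.+1 => m i)).
have rho_r j k : (j <= k)%N -> rho k <= r (z (s j)) / 2.
  by move=> jk; apply: le_trans (rho_m j k jk) _; rewrite ge_min lexx.
have disj j k w : (j < k)%N -> ball (z (s j)) (rho j) w -> ball (z (s k)) (rho k) w -> False.
  move=> jk; rewrite !ballEmdist /= => jw kw.
  have := far j k jk; have := metric_triangle (z (s j)) w (z (s k)).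
  rewrite (metric_sym w); have := rho_r j j (leqnn j); have := rho_r j k (ltnW jk).
  lra.
exists s, rho; split => //.
- move=> k; rewrite /rho; elim/big_ind: _ => //.
    by move=> a b a0 b0; rewrite lt_min a0 b0.
  by move=> j _; rewrite lt_min divr_gt0 ?(rNP _).1 // invr_gt0 ltr0n.
- by move=> k; apply: le_trans (rho_m k k (leqnn k)) _; rewrite ge_min lexx orbT.
- move=> j k w jw kw; case: (ltngtP j k) => [jk|kj|//]; exfalso.
    exact: disj jk jw kw.
  exact: disj kj kw jw.
Qed.

Lemma escaping_locally_finite (R : realType) (Y : metricType R) (z : nat -> Y)
    (rho : nat -> R) :
  escaping z -> (forall k, rho k <= k.+1%:R^-1) ->
  forall w : Y, exists2 U : set Y, nbhs w U &
    exists K, forall k u, (K <= k)%N -> U u -> ~ ball (z k) (rho k) u.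
Proof.
move=> esc rho_le w; have [r r0 [N _ Nr]] := esc w.
have r20 : 0 < r / 2 by rewrite divr_gt0.
have [M _ Mr] := near_infty_natSinv_lt (PosNum r20).
exists (ball w (r / 2)); first exact: nbhsx_ballx.
exists (maxn N M) => k u NMk; rewrite !ballEmdist /= => wu zu.
have far := Nr k (leq_trans (leq_maxl _ _) NMk).
have small : rho k < r / 2 := le_lt_trans (rho_le k) (Mr k (leq_trans (leq_maxr _ _) NMk)).
by have := metric_triangle w u (z k); rewrite (metric_sym u (z k)); lra.
Qed.

Lemma escaping_alternating_Aloc (R : realType) (Y : metricType R) (A : set (Y -> R))
    (y : nat -> Y) :
  subspace_of_C A -> adequate A -> (A = Aloc A \/ A = Aloc_b A) -> escaping y ->
  exists s, {homo s : m n / (m < n)%N} /\ exists g, A g /\ alternating g (y \o s).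
Proof.
move=> [_ [A0 [AD _]]] Aad Aloc_eq esc.
have [s [rho [sinc rho0 rho_le disj]]] := escaping_disjoint_balls esc.
pose z := y \o s; pose B k := ball (z k) (rho k).
have [f fP] : {f : nat -> Y -> R & forall k, [/\ A (f k), f k (z k) = 1,
    forall w, ~ B k w -> f k w = 0 & forall w, 0 <= f k w <= 1]}.
  apply: (@choice _ _ (fun k f => [/\ A f, f (z k) = 1,
    forall w, ~ B k w -> f w = 0 & forall w, 0 <= f w <= 1])) => k.
  apply: adequate_bump => //; first by rewrite closedC; exact: metric_ball_open.
  by apply; apply: ballxx.
pose f' k := if odd k then f k else fun _ => 0.
have f'_out k w : ~ B k w -> f' k w = 0.
  by rewrite /f'; case: odd => //; have [_ _ fk_out _] := fP k; exact: fk_out.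
pose g := glue f' B.
have gz k : g (y (s k)) = if odd k then 1 else 0.
  by rewrite /g (glueE f' disj (ballxx _ (rho0 k))) /f'; case: odd => //; case: (fP k).
have gloc : Aloc A g.
  apply: Aloc_glue => //; first by move=> k; rewrite /f'; case: odd => //; case: (fP k).
  apply: escaping_locally_finite rho_le; apply: escaping_comp esc _; exact: increasing_cvg_infty.
exists s; split => //; exists g; split; last first.
  by move=> n; rewrite /= !gz /= odd_double.
case: Aloc_eq => ->; first exact: gloc.
split; first exact: gloc.
exists 1 => w; rewrite /g /glue /f'; case: odd; last by rewrite normr0.
by have [_ _ _ /(_ w) /andP[f0 f1]] := fP (xget 0%N [set k | B k w]); rewrite ger0_norm.
Qed.

Theorem corollary4p3 (R : realType) (X Y : metricType R)
  (AX : set (X -> R)) (AY : set (Y -> R)) :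
  subspace_of_C AX -> adequate AX ->
  subspace_of_C AY -> adequate AY ->
  ((AY = Aloc AY \/ AY = Aloc_b AY) \/
   (complete_metric Y /\
    forall y : nat -> Y, separated_seq y ->
      exists g, AY g /\ forall n : nat,
        g (y n.*2.+1) = 1 /\ g (y n.*2) = 0)) ->
  forall (h : {ptws idx AX -> \bar R} -> {ptws idx AY -> \bar R}),
    homeomorphism_on (compactif AX) (compactif AY) h ->
  forall x0 : X, range (cembed AY) (h (cembed AX x0)).
Proof.
move=> [AXcont _] [[AXsep _] _] AYsub AYad hyp h hh x0.
have Kx0 : compactif AX (cembed AX x0) by apply: subset_closure; exists x0.
have [y yq] := closure_range_cvg_seq (hh.1 _ Kx0)
  (homeomorphism_countable_nbhs_base hh Kx0 (countable_nbhs_base_cembed AXcont AXsep x0)).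
apply: contrapT => nq; have esc := escaping_of_cvg_cembed AYsub.1 yq nq.
suff [s [sinc [g [Ag alt]]]] : exists s, {homo s : m n / (m < n)%N} /\
    exists g, AY g /\ alternating g (y \o s).
  exact: not_alternating_of_cvg_cembed (cvg_comp _ _ (increasing_cvg_infty sinc) yq) Ag alt.
case: hyp => [Aloc_eq|[Ycomp sepAY]].
  exact: escaping_alternating_Aloc AYsub AYad Aloc_eq esc.
have [s [sinc sep]] := escaping_separated_subseq Ycomp esc.
by exists s; split => //; exact: sepAY.
Qed.
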